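(* Let $\alpha\in\mathbb{Z}_2^n$ and $c\in\mathbb{Z}_2$. Then $$\max_{\beta,\gamma\in\mathbb{Z}_2^n}\mathrm{cadp}_c(\alpha,\beta,\gamma)\le\max_{\beta,\gamma\in\mathbb{Z}_2^n}\mathrm{cadp}_0(\alpha,\beta,\gamma)=\max_{\beta,\gamma\in\mathbb{Z}_2^n}\mathrm{adp}^{\oplus}(\alpha,\beta\to\gamma)=\mathrm{adp}^{\oplus}(\alpha,\alpha\to0).$$
   Context: For $x\in\mathbb{Z}_2^n$, $x=(x_0,\dots,x_{n-1})$ is identified with the integer $\sum_i x_i2^{n-1-i}$; $+$ is addition modulo $2^n$, $\oplus$ is bitwise XOR. $\mathrm{adp}^{\oplus}(\alpha,\beta\to\gamma)=4^{-n}\#\{(x,y): (x+\alpha)\oplus(y+\beta)=(x\oplus y)+\gamma\}$. Indices $0,\dots,7$ are identified with $\mathbb{Z}_2^3$ via $(p_0,p_1,p_2)\leftrightarrow4p_0+2p_1+p_2$; $e_0,\dots,e_7$ are the standard basis row vectors of $\mathbb{Q}^8$. $A_0$ is $\frac14$ times the $8\times8$ matrix with rows $(4,0,0,1,0,1,1,0)$, $(0,0,0,1,0,1,0,0)$, $(0,0,0,1,0,0,1,0)$, $(0,0,0,1,0,0,0,0)$, $(0,0,0,0,0,1,1,0)$, $(0,0,0,0,0,1,0,0)$, $(0,0,0,0,0,0,1,0)$, $(0,\dots,0)$, and $(A_k)_{i,j}=(A_0)_{i\oplus k,j\oplus k}$. For $\alpha,\beta,\gamma$ let $\omega_i=4\alpha_i+2\beta_i+\gamma_i$.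 With $L_0=(1,0,1,0,1,0,1,0)$, $L_1=(0,1,0,1,0,1,0,1)$, $\mathrm{cadp}_c(\alpha,\beta,\gamma)=L_cA_{\omega_0}\cdots A_{\omega_{n-1}}e_0^T$. (It is known that $\mathrm{adp}^{\oplus}(\alpha,\beta\to\gamma)=\mathrm{cadp}_0(\alpha,\beta,\gamma)+\mathrm{cadp}_1(\alpha,\beta,\gamma)$.) *)

From HB Require Import structures.
From mathcomp Require Import all_boot all_order all_algebra.
From Stdlib Require Import PeanoNat.
Set Implicit Arguments. Unset Strict Implicit. Unset Printing Implicit Defensive.
Import Order.TTheory GRing.Theory Num.Theory.
Local Open Scope ring_scope.

Definition bv (n : nat) := n.-tuple bool.

(* integer identification: x <-> sum_i x_i 2^(n-1-i)  (x_0 most significant) *)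
Definition toNat n (x : bv n) : nat :=
  (\sum_(i < n) (tnth x i) * 2 ^ (n.-1 - i))%N.

Definition ofNat n (k : nat) : bv n :=
  [tuple odd (k %/ 2 ^ (n.-1 - i)) | i < n].

Definition addm n (x y : bv n) : bv n := ofNat n (toNat x + toNat y).

Definition xorv n (x y : bv n) : bv n := [tuple tnth x i (+) tnth y i | i < n].

Definition zerov n : bv n := [tuple false | i < n].

Definition adp n (alpha beta gamma : bv n) : rat :=
  (#|[set p : bv n * bv n |
       xorv (addm p.1 alpha) (addm p.2 beta) == addm (xorv p.1 p.2) gamma]|)%:R
  / (4 ^ n)%:R.

Definition xor8 (i k : 'I_8) : 'I_8 := inord (Nat.lxor i k).

Definition A0 : 'M[rat]_8 :=
  (1 / 4%:R) *: \matrix_(i < 8, j < 8)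
    (nth 0 (nth [::] [:: [:: 4; 0; 0; 1; 0; 1; 1; 0];
                       [:: 0; 0; 0; 1; 0; 1; 0; 0];
                       [:: 0; 0; 0; 1; 0; 0; 1; 0];
                       [:: 0; 0; 0; 1; 0; 0; 0; 0];
                       [:: 0; 0; 0; 0; 0; 1; 1; 0];
                       [:: 0; 0; 0; 0; 0; 1; 0; 0];
                       [:: 0; 0; 0; 0; 0; 0; 1; 0];
                       [:: 0; 0; 0; 0; 0; 0; 0; 0]] i) j)%:R.

Definition Amat (k : 'I_8) : 'M[rat]_8 :=
  \matrix_(i < 8, j < 8) A0 (xor8 i k) (xor8 j k).

Definition omega n (alpha beta gamma : bv n) (i : 'I_n) : 'I_8 :=
  inord (4 * tnth alpha i + 2 * tnth beta i + tnth gamma i)%N.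

Definition Lvec (c : bool) : 'rV[rat]_8 := \row_(j < 8) (odd j == c)%:R.

Definition e0T : 'cV[rat]_8 := \col_(j < 8) (j == 0 :> nat)%:R.

Definition cadp (c : bool) n (alpha beta gamma : bv n) : rat :=
  (Lvec c *m (\prod_(i < n) Amat (omega alpha beta gamma i)) *m e0T) 0 0.

(* maximum of f(beta, gamma) over all beta, gamma in Z_2^n
   (the big operator's unit f 0 0 is itself one of the values) *)
Definition maxBG n (f : bv n -> bv n -> rat) : rat :=
  \big[Num.max/f (zerov n) (zerov n)]_(p : bv n * bv n) f p.1 p.2.

From mathcomp Require Import all_boot all_order all_algebra.
From mathcomp Require Import ring lra zify.
Import Order.TTheory GRing.Theory Num.Theory.
Set Implicit Arguments. Unset Strict Implicit.

(* Processing the bits from the least significant end, the equation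
   (x + α) ⊕ (y + β) = (x ⊕ y) + γ is checked by an automaton whose state is the triple
   of carries of x + α, y + β and (x ⊕ y) + γ, and A_ω is a quarter of its matrix of
   transition counts on the bit triple ω.  Hence entry t of A_{ω_0} ⋯ A_{ω_{n-1}} e_0^T
   is 4^-n times the number of solutions (x, y) ending in carry state t: adp is the sum
   of these entries and cadp_c collects the states whose last carry is c.
   Group the states by the carry c of x + α and the parity p of the two other carries.
   Reading one more bit triple (a, b, g), the mass of group (c, p) becomes at most
   [c = a] times the mass of group (a, b ⊕ g) plus a quarter of the mass of group
   (¬a, ¬(b ⊕ g)), so every mass, hence adp(α, β → γ), is bounded by a quantity that
   depends on α alone.  For β = α and γ = 0 the last carry is always 0, and on such
   states these inequalities are reversed, so the bound is attained by
   adp(α, α → 0) = cadp_0(α, α, 0). *)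

Lemma Nat_powE m k : Nat.pow m k = m ^ k.
Proof. by elim: k => //= k IHk; rewrite expnS IHk. Qed.

Lemma toNatE n (x : bv n) : toNat x = \sum_(i < n) tnth x i * 2 ^ (n.-1 - i).
Proof. by apply: eq_bigr => i _; rewrite Nat_powE. Qed.

Lemma toNat_cons n x0 (x : bv n) : toNat [tuple of x0 :: x] = x0 * 2 ^ n + toNat x.
Proof.
rewrite !toNatE big_ord_recl tnth0 subn0; congr (_ + _).
apply: eq_bigr => i _; rewrite tnthS; congr (_ * 2 ^ _).
by case: n x i => [|n] x [i lt_in] //=; rewrite /bump /=; lia.
Qed.

Lemma toNat_lt n (x : bv n) : toNat x < 2 ^ n.
Proof.
elim: n x => [|n IHn] x; first by rewrite toNatE big_ord0.
case/tupleP: x => x0 x; rewrite toNat_cons expnS.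
by have := IHn x; case: x0 => /=; lia.
Qed.

Lemma toNat_zerov n : toNat (zerov n) = 0.
Proof. by rewrite toNatE big1 // => i _; rewrite tnth_mktuple. Qed.

Lemma ofNat_cons n k : ofNat n.+1 k = [tuple of odd (k %/ 2 ^ n) :: ofNat n k].
Proof.
apply: eq_from_tnth => i; rewrite /ofNat tnth_mktuple Nat_powE.
case: (unliftP ord0 i) => [j ->|->]; last by rewrite tnth0 subn0.
rewrite tnthS tnth_mktuple Nat_powE; congr (odd (k %/ 2 ^ _)).
by case: j => j lt_jn; rewrite /= /bump /=; lia.
Qed.

Lemma ofNatMDl n m k : ofNat n (m * 2 ^ n + k) = ofNat n k.
Proof.
apply: eq_from_tnth => i; rewrite !tnth_mktuple Nat_powE.
have -> : 2 ^ n = 2 ^ (n.-1 - i) * 2 ^ (n - (n.-1 - i)).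
  by rewrite -expnD; congr (2 ^ _); case: i => i /=; lia.
rewrite mulnA mulnAC divnMDl ?expn_gt0 // oddD oddM oddX /=.
have -> : (n - (n.-1 - i) == 0) = false by case: i => i /=; lia.
by rewrite andbF.
Qed.

Definition carry n (x a : bv n) : bool := 2 ^ n <= toNat x + toNat a.

Lemma divn_carry n (x a : bv n) : (toNat x + toNat a) %/ 2 ^ n = carry x a.
Proof.
have lt_x := toNat_lt x; have lt_a := toNat_lt a.
have gt0_2n : 0 < 2 ^ n by rewrite expn_gt0.
rewrite /carry; case: leqP => [le_2n_sum | /divn_small //].
apply/eqP; rewrite eqn_leq -ltnS ltn_divLR // leq_divRL //; apply/andP; split; lia.
Qed.

Lemma carry_zerov n (x : bv n) : carry x (zerov n) = false.
Proof. by rewrite /carry toNat_zerov addn0 leqNgt toNat_lt. Qed.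

Definition maj (x y z : bool) : bool := [|| x && y, x && z | y && z].

Lemma carry_cons n x0 a0 (x a : bv n) :
  carry [tuple of x0 :: x] [tuple of a0 :: a] = maj x0 a0 (carry x a).
Proof.
rewrite /carry !toNat_cons expnS /maj.
have := toNat_lt x; have := toNat_lt a.
by case: (leqP (2 ^ n) (toNat x + toNat a)); case: x0; case: a0 => /=; lia.
Qed.

Lemma addm_cons n x0 a0 (x a : bv n) :
  addm [tuple of x0 :: x] [tuple of a0 :: a] =
  [tuple of x0 (+) a0 (+) carry x a :: addm x a].
Proof.
rewrite /addm ofNat_cons !toNat_cons.
have -> : x0 * 2 ^ n + toNat x + (a0 * 2 ^ n + toNat a) =
          (x0 + a0) * 2 ^ n + (toNat x + toNat a) by lia.
rewrite ofNatMDl divnMDl ?expn_gt0 // divn_carry.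
by congr [tuple of _ :: _]; case: x0; case: a0; case: (carry x a).
Qed.

Lemma xorv_cons n x0 y0 (x y : bv n) :
  xorv [tuple of x0 :: x] [tuple of y0 :: y] = [tuple of x0 (+) y0 :: xorv x y].
Proof.
apply: eq_from_tnth => i; rewrite tnth_mktuple.
by case: (unliftP ord0 i) => [j ->|->]; rewrite ?tnthS ?tnth0 ?tnth_mktuple.
Qed.

Lemma zerov_cons n : zerov n.+1 = [tuple of false :: zerov n].
Proof.
apply: eq_from_tnth => i; rewrite tnth_mktuple.
by case: (unliftP ord0 i) => [j ->|->]; rewrite ?tnthS ?tnth0 ?tnth_mktuple.
Qed.

Lemma big_tuple0 (R : Type) (idx : R) (op : Monoid.law idx) (T : finType)
    (F : 0.-tuple T -> R) :
  \big[op/idx]_(x : 0.-tuple T) F x = F [tuple].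
Proof. by rewrite (big_pred1 [tuple]) // => x; apply/esym/eqP/tuple0. Qed.

Lemma big_tuple_cons (R : Type) (idx : R) (op : Monoid.com_law idx) (T : finType) n
    (F : n.+1.-tuple T -> R) :
  \big[op/idx]_(x : n.+1.-tuple T) F x =
  \big[op/idx]_(x0 : T) \big[op/idx]_(x : n.-tuple T) F [tuple of x0 :: x].
Proof.
rewrite pair_big (reindex (fun p : T * n.-tuple T => [tuple of p.1 :: p.2])) //=.
exists (fun x => (thead x, [tuple of behead x])) => [[x0 x] _ | x _] /=.
  by congr pair; apply: val_inj.
by rewrite [RHS]tuple_eta.
Qed.

Lemma sum_mul_andb_eq (I : finType) (F : I -> nat) (b : bool) (j : I) :
  \sum_(i : I) F i * (b && (j == i)) = b * F j.
Proof.
case: b; last by rewrite big1 // => i _; rewrite muln0.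
rewrite (bigD1 j) //= eqxx muln1 mul1n big1 ?addn0 // => i.
by rewrite eq_sym => /negbTE ->; rewrite muln0.
Qed.

(* As a carry state, t has components p0 t, p1 t, p2 t: the carries of x + α, y + β and
   (x ⊕ y) + γ. *)
Definition p0 (t : nat) : bool := odd t./2./2.
Definition p1 (t : nat) : bool := odd t./2.
Definition p2 (t : nat) : bool := odd t.

Definition omega_bits (a b g : bool) : 'I_8 := inord (4 * a + 2 * b + g).

Lemma p0_omega_bits a b g : p0 (omega_bits a b g) = a.
Proof. by rewrite /p0 /omega_bits inordK; case: a; case: b; case: g. Qed.

Lemma p1_omega_bits a b g : p1 (omega_bits a b g) = b.
Proof. by rewrite /p1 /omega_bits inordK; case: a; case: b; case: g. Qed.

Lemma p2_omega_bits a b g : p2 (omega_bits a b g) = g.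
Proof. by rewrite /p2 /omega_bits inordK; case: a; case: b; case: g. Qed.

Lemma eq_omega_bits a b g (t : 'I_8) :
  (omega_bits a b g == t) = [&& p0 t == a, p1 t == b & p2 t == g].
Proof.
rewrite -val_eqE /= /omega_bits inordK; last by case: a; case: b; case: g.
by case: t => t lt_t8; case: a; case: b; case: g; do 8?[case: t lt_t8 => [|t] lt_t8].
Qed.

(* One bit position: a, b, g are bits of α, β, γ and x, y bits of the unknowns; the output
   bits of (x + α) ⊕ (y + β) and (x ⊕ y) + γ agree and the carries go from s to t. *)
Definition transition (a b g : bool) (t s : nat) (x y : bool) : bool :=
  [&& (x (+) a (+) p0 s) (+) (y (+) b (+) p1 s) == (x (+) y) (+) g (+) p2 s,
      p0 t == maj x a (p0 s), p1 t == maj y b (p1 s)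
    & p2 t == maj (x (+) y) g (p2 s)].

Definition ntrans (a b g : bool) (t s : nat) : nat :=
  \sum_(x : bool) \sum_(y : bool) transition a b g t s x y.

Definition in_group (c p : bool) (j : nat) : bool :=
  (p0 j == c) && (p1 j (+) p2 j == p).

Lemma ntrans_colsum a b g (s : 'I_8) :
  \sum_(t < 8) ntrans a b g t s =
  4 * (in_group false (a (+) b (+) g) s + in_group true (~~ (a (+) b (+) g)) s).
Proof.
rewrite !big_ord_recl big_ord0 /ntrans !big_bool; case: s => s lt_s8.
by case: a; case: b; case: g; do 8?[case: s lt_s8 => [|s] lt_s8].
Qed.

Lemma ntrans_group_le a b g c p (s : 'I_8) :
  \sum_(t < 8) in_group c p t * ntrans a b g t s <=
  4 * ((c == a) && in_group a (b (+) g) s) + in_group (~~ a) (~~ (b (+) g)) s.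
Proof.
rewrite !big_ord_recl big_ord0 /ntrans !big_bool; case: s => s lt_s8.
by case: a; case: b; case: g; case: c; case: p; do 8?[case: s lt_s8 => [|s] lt_s8].
Qed.

(* This fails for odd s, but odd states never occur when γ = 0. *)
Lemma ntrans_group_diag a c (s : 'I_8) : ~~ odd s ->
  4 * ((c == a) && in_group a a s) + in_group (~~ a) (~~ a) s <=
  \sum_(t < 8) in_group c c t * ntrans a a false t s.
Proof.
rewrite !big_ord_recl big_ord0 /ntrans !big_bool; case: s => s lt_s8.
by case: a; case: c; do 8?[case: s lt_s8 => [|s] lt_s8].
Qed.

Definition solution n (al be ga x y : bv n) : bool :=
  xorv (addm x al) (addm y be) == addm (xorv x y) ga.

Definition carry_state n (al be ga x y : bv n) : 'I_8 :=
  omega_bits (carry x al) (carry y be) (carry (xorv x y) ga).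

Definition nsol n (al be ga : bv n) (t : 'I_8) : nat :=
  \sum_(x : bv n) \sum_(y : bv n)
    (solution al be ga x y && (carry_state al be ga x y == t)).

Lemma solution_cons n a b g (al be ga x y : bv n) x0 y0 (t : 'I_8) :
  solution [tuple of a :: al] [tuple of b :: be] [tuple of g :: ga]
           [tuple of x0 :: x] [tuple of y0 :: y] &&
  (carry_state [tuple of a :: al] [tuple of b :: be] [tuple of g :: ga]
               [tuple of x0 :: x] [tuple of y0 :: y] == t) =
  solution al be ga x y && transition a b g t (carry_state al be ga x y) x0 y0.
Proof.
rewrite /solution /carry_state /transition !xorv_cons !addm_cons !xorv_cons.
rewrite !carry_cons eq_omega_bits p0_omega_bits p1_omega_bits p2_omega_bits.
by rewrite -val_eqE /= eqseq_cons -andbA andbCA.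
Qed.

Lemma nsol_cons n a b g (al be ga : bv n) t :
  nsol [tuple of a :: al] [tuple of b :: be] [tuple of g :: ga] t =
  \sum_(s < 8) ntrans a b g t s * nsol al be ga s.
Proof.
have -> : \sum_(s < 8) ntrans a b g t s * nsol al be ga s =
    \sum_(x : bv n) \sum_(y : bv n)
      solution al be ga x y * ntrans a b g t (carry_state al be ga x y).
  under eq_bigr do rewrite big_distrr; rewrite exchange_big; apply: eq_bigr => x _.
  under eq_bigr do rewrite big_distrr; rewrite exchange_big; apply: eq_bigr => y _.
  exact: sum_mul_andb_eq.
rewrite /nsol big_tuple_cons.
under eq_bigr => x0 _ do under eq_bigr => x _ do rewrite big_tuple_cons.
rewrite exchange_big; apply: eq_bigr => x _.
under eq_bigr do rewrite exchange_big; rewrite exchange_big; apply: eq_bigr => y _.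
rewrite /ntrans big_distrr; apply: eq_bigr => x0 _; rewrite big_distrr.
by apply: eq_bigr => y0 _; rewrite solution_cons; exact/esym/mulnb.
Qed.

Lemma sum_nsol n (al be ga : bv n) :
  \sum_(t < 8) nsol al be ga t = #|[set p : bv n * bv n | solution al be ga p.1 p.2]|.
Proof.
have -> : #|[set p : bv n * bv n | solution al be ga p.1 p.2]| =
    \sum_(x : bv n) \sum_(y : bv n) solution al be ga x y.
  rewrite -sum1_card big_mkcond pair_big /=.
  by apply: eq_bigr => -[x y] _; rewrite inE; case: solution.
rewrite exchange_big; apply: eq_bigr => x _; rewrite exchange_big; apply: eq_bigr => y _.
have := sum_mul_andb_eq (fun _ => 1) (solution al be ga x y) (carry_state al be ga x y).
by rewrite muln1 => <-; apply: eq_bigr => t _; rewrite mul1n.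
Qed.

Lemma nsol_zerov_odd n (al be : bv n) (t : 'I_8) : odd t -> nsol al be (zerov n) t = 0.
Proof.
move=> odd_t; apply: big1 => x _; apply: big1 => y _.
by rewrite /carry_state carry_zerov eq_omega_bits /p2 odd_t !andbF.
Qed.

Local Open Scope ring_scope.

Lemma xor8E (i k : 'I_8) : xor8 i k = Nat.lxor i k :> nat.
Proof.
rewrite /xor8 inordK //; case: i k => i lt_i8 [k lt_k8] /=.
by do 8?[case: i lt_i8 => [|i] lt_i8]; do 8?[case: k lt_k8 => [|k] lt_k8].
Qed.

Lemma Amat_omega_bits a b g (t s : 'I_8) :
  Amat (omega_bits a b g) t s = (ntrans a b g t s)%:R / 4%:R.
Proof.
rewrite /Amat /A0 !mxE !xor8E /omega_bits inordK; last by case: a; case: b; case: g.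
rewrite mul1r mulrC; congr (_%:R / _).
rewrite /ntrans !big_bool; case: t s => t lt_t8 [s lt_s8] /=.
by case: a; case: b; case: g;
  do 8?[case: t lt_t8 => [|t] lt_t8]; do 8?[case: s lt_s8 => [|s] lt_s8].
Qed.

Definition carry_distr n (al be ga : bv n) : 'cV[rat]_8 :=
  (\prod_(i < n) Amat (omega al be ga i)) *m e0T.

Lemma carry_distr0 (al be ga : bv 0) : carry_distr al be ga = e0T.
Proof. by rewrite /carry_distr big_ord0 mul1mx. Qed.

Lemma carry_distr_cons n a b g (al be ga : bv n) :
  carry_distr [tuple of a :: al] [tuple of b :: be] [tuple of g :: ga] =
  Amat (omega_bits a b g) *m carry_distr al be ga.
Proof.
rewrite /carry_distr big_ord_recl -mulmxE -mulmxA /omega tnth0; congr (_ *m (_ *m _)).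
by apply: eq_bigr => i _; rewrite !tnthS.
Qed.

Lemma carry_distrE n (al be ga : bv n) t :
  carry_distr al be ga t 0 = (nsol al be ga t)%:R / (4 ^ n)%:R.
Proof.
elim: n al be ga t => [|n IHn] al be ga t.
  rewrite carry_distr0 mxE /nsol !big_tuple0 expn0 divr1.
  have -> : solution al be ga [tuple] [tuple] by apply/eqP; rewrite [LHS]tuple0 [RHS]tuple0.
  rewrite /carry_state /carry !toNatE !big_ord0 eq_omega_bits.
  by case: t => t lt_t8; do 8?[case: t lt_t8 => [|t] lt_t8].
case/tupleP: al => a al; case/tupleP: be => b be; case/tupleP: ga => g ga.
rewrite carry_distr_cons mxE nsol_cons natr_sum mulr_suml; apply: eq_bigr => s _.
rewrite Amat_omega_bits IHn natrM expnS natrM; field.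
by rewrite pnatr_eq0 expn_eq0.
Qed.

Lemma carry_distr_ge0 n (al be ga : bv n) t : 0 <= carry_distr al be ga t 0.
Proof. by rewrite carry_distrE divr_ge0 ?ler0n. Qed.

Lemma carry_distr_zerov_odd n (al be : bv n) (t : 'I_8) :
  odd t -> carry_distr al be (zerov n) t 0 = 0.
Proof. by move=> odd_t; rewrite carry_distrE nsol_zerov_odd // mul0r. Qed.

Lemma adpE n (al be ga : bv n) : adp al be ga = \sum_(t < 8) carry_distr al be ga t 0.
Proof.
rewrite /adp Nat_powE -sum_nsol natr_sum mulr_suml.
by apply: eq_bigr => t _; rewrite carry_distrE.
Qed.

Lemma cadpE c n (al be ga : bv n) :
  cadp c al be ga = \sum_(t < 8) (odd t == c)%:R * carry_distr al be ga t 0.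
Proof. by rewrite /cadp -mulmxA mxE; apply: eq_bigr => t _; rewrite !mxE. Qed.

Lemma adp_cadp n (al be ga : bv n) : adp al be ga = cadp false al be ga + cadp true al be ga.
Proof.
rewrite adpE !cadpE -big_split; apply: eq_bigr => t _.
by case: (odd t); rewrite /= mul0r mul1r ?addr0 ?add0r.
Qed.

Lemma cadp_ge0 c n (al be ga : bv n) : 0 <= cadp c al be ga.
Proof. by rewrite cadpE sumr_ge0 // => t _; rewrite mulr_ge0 ?carry_distr_ge0. Qed.

Lemma cadp_true_zerov n (al be : bv n) : cadp true al be (zerov n) = 0.
Proof.
rewrite cadpE big1 // => t _.
by case odd_t: (odd t); [rewrite carry_distr_zerov_odd // mulr0 | rewrite mul0r].
Qed.

Definition mass (c p : bool) (v : 'cV[rat]_8) : rat :=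
  \sum_(j < 8) (in_group c p j)%:R * v j 0.

(* The bound of mass_Amat_le with the masses of the previous step replaced by their
   own bounds. *)
Fixpoint mass_bound (c : bool) (s : seq bool) : rat :=
  if s is a :: s' then (c == a)%:R * mass_bound a s' + mass_bound (~~ a) s' / 4%:R
  else (~~ c)%:R.

Lemma mass_e0T c p : mass c p e0T = (~~ c && ~~ p)%:R.
Proof. by rewrite /mass !big_ord_recl big_ord0 !mxE /=; case: c; case: p => /=; lra. Qed.

Lemma weighted_sum_Amat (w : 'I_8 -> nat) a b g (v : 'cV[rat]_8) :
  \sum_(t < 8) (w t)%:R * (Amat (omega_bits a b g) *m v) t 0 =
  \sum_(s < 8) (\sum_(t < 8) w t * ntrans a b g t s)%:R / 4%:R * v s 0.
Proof.
under eq_bigr do rewrite mxE mulr_sumr.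
rewrite exchange_big; apply: eq_bigr => s _.
rewrite natr_sum !mulr_suml; apply: eq_bigr => t _.
by rewrite Amat_omega_bits natrM !mulrA.
Qed.

Lemma sum_Amat_mul a b g (v : 'cV[rat]_8) :
  \sum_(t < 8) (Amat (omega_bits a b g) *m v) t 0 =
  mass false (a (+) b (+) g) v + mass true (~~ (a (+) b (+) g)) v.
Proof.
transitivity (\sum_(t < 8) (1%N)%:R * (Amat (omega_bits a b g) *m v) t 0).
  by apply: eq_bigr => t _; rewrite mul1r.
rewrite (weighted_sum_Amat (fun _ => 1%N)).
rewrite /mass -big_split; apply: eq_bigr => s _ /=.
under eq_bigr do rewrite mul1n.
by rewrite ntrans_colsum natrM natrD; field.
Qed.

Lemma mass_Amat_le a b g c p (v : 'cV[rat]_8) : (forall s, 0 <= v s 0) ->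
  mass c p (Amat (omega_bits a b g) *m v) <=
  (c == a)%:R * mass a (b (+) g) v + mass (~~ a) (~~ (b (+) g)) v / 4%:R.
Proof.
move=> v_ge0; rewrite /mass weighted_sum_Amat mulr_sumr mulr_suml -big_split /=.
apply: ler_sum => s _.
apply: le_trans (_ : (4 * ((c == a) && in_group a (b (+) g) s) +
    in_group (~~ a) (~~ (b (+) g)) s)%:R / 4%:R * v s 0 <= _).
  by rewrite ler_wpM2r // ler_wpM2r // ler_nat ntrans_group_le.
by case: (c == a); case: in_group; case: in_group => /=; lra.
Qed.

Lemma mass_Amat_diag a c (v : 'cV[rat]_8) :
  (forall s, 0 <= v s 0) -> (forall s : 'I_8, odd s -> v s 0 = 0) ->
  (c == a)%:R * mass a a v + mass (~~ a) (~~ a) v / 4%:R <=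
  mass c c (Amat (omega_bits a a false) *m v).
Proof.
move=> v_ge0 v_odd; rewrite /mass weighted_sum_Amat mulr_sumr mulr_suml -big_split /=.
apply: ler_sum => s _.
have [odd_s | even_s] := boolP (odd s); first by rewrite v_odd // !mulr0 mul0r addr0.
apply: le_trans (_ : _ <= (4 * ((c == a) && in_group a a s) +
    in_group (~~ a) (~~ a) s)%:R / 4%:R * v s 0) _; last first.
  by rewrite ler_wpM2r // ler_wpM2r // ler_nat ntrans_group_diag.
by case: (c == a); case: in_group; case: in_group => /=; lra.
Qed.

Lemma mass_carry_distr_le n (al be ga : bv n) c p :
  mass c p (carry_distr al be ga) <= mass_bound c al.
Proof.
elim: n al be ga c p => [|n IHn] al be ga c p.
  by rewrite carry_distr0 mass_e0T (tuple0 al) /=; case: c; case: p.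
case/tupleP: al => a al; case/tupleP: be => b be; case/tupleP: ga => g ga.
rewrite carry_distr_cons /=.
apply: le_trans (mass_Amat_le _ _ _ _ _ (carry_distr_ge0 _ _ _)) _.
by rewrite lerD // (ler_wpM2l, ler_wpM2r) ?ler0n ?IHn.
Qed.

Lemma mass_bound_le_diag n (al : bv n) c :
  mass_bound c al <= mass c c (carry_distr al al (zerov n)).
Proof.
elim: n al c => [|n IHn] al c.
  by rewrite carry_distr0 mass_e0T (tuple0 al) /=; case: c.
case/tupleP: al => a al; rewrite zerov_cons carry_distr_cons /=.
apply: le_trans (mass_Amat_diag _ _ (carry_distr_ge0 _ _ _) (carry_distr_zerov_odd _ _)).
by rewrite lerD // (ler_wpM2l, ler_wpM2r) ?ler0n ?IHn.
Qed.

Lemma adp_cons n a b g (al be ga : bv n) :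
  adp [tuple of a :: al] [tuple of b :: be] [tuple of g :: ga] =
  mass false (a (+) b (+) g) (carry_distr al be ga) +
  mass true (~~ (a (+) b (+) g)) (carry_distr al be ga).
Proof. by rewrite adpE carry_distr_cons sum_Amat_mul. Qed.

Lemma adp_le_diag n (al be ga : bv n) : adp al be ga <= adp al al (zerov n).
Proof.
case: n al be ga => [|n] al be ga; first by rewrite !adpE !carry_distr0.
case/tupleP: al => a al; case/tupleP: be => b be; case/tupleP: ga => g ga.
rewrite zerov_cons !adp_cons addbb addbF /=.
apply: le_trans (lerD (mass_carry_distr_le _ _ _ _ _) (mass_carry_distr_le _ _ _ _ _)) _.
exact: lerD (mass_bound_le_diag _ _) (mass_bound_le_diag _ _).
Qed.

Lemma maxBG_le n (f : bv n -> bv n -> rat) M : (forall b g, f b g <= M) -> maxBG f <= M.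
Proof. by move=> f_le; apply: bigmax_le => [|[b g] _]; apply: f_le. Qed.

Lemma maxBG_attained n (f : bv n -> bv n -> rat) b0 g0 :
  (forall b g, f b g <= f b0 g0) -> maxBG f = f b0 g0.
Proof.
move=> f_le; apply/le_anti; rewrite maxBG_le //=.
exact: le_bigmax (fun p => f p.1 p.2) (b0, g0).
Qed.

Theorem lemma4 (n : nat) (alpha : bv n) (c : bool) :
  [/\ maxBG (fun beta gamma => cadp c alpha beta gamma)
        <= maxBG (fun beta gamma => cadp false alpha beta gamma),
      maxBG (fun beta gamma => cadp false alpha beta gamma)
        = maxBG (fun beta gamma => adp alpha beta gamma)
    & maxBG (fun beta gamma => adp alpha beta gamma)
        = adp alpha alpha (zerov n)].
Proof.
have cadp_le_adp c' beta gamma : cadp c' alpha beta gamma <= adp alpha beta gamma.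
  by rewrite adp_cadp; case: c'; rewrite ?lerDl ?lerDr cadp_ge0.
have adp_diag : adp alpha alpha (zerov n) = cadp false alpha alpha (zerov n).
  by rewrite adp_cadp cadp_true_zerov addr0.
have max_adp : maxBG (fun beta gamma => adp alpha beta gamma) = adp alpha alpha (zerov n).
  exact: maxBG_attained (adp_le_diag alpha).
have max_cadp0 : maxBG (fun beta gamma => cadp false alpha beta gamma) =
                 adp alpha alpha (zerov n).
  rewrite adp_diag; apply: maxBG_attained => beta gamma.
  by rewrite -adp_diag (le_trans (cadp_le_adp _ _ _)) ?adp_le_diag.
rewrite max_cadp0 max_adp; split => //.
by apply: maxBG_le => beta gamma; rewrite (le_trans (cadp_le_adp _ _ _)) ?adp_le_diag.
Qed.
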